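(* Let $C$ be an independent set of the Kneser graph of flags of type $\{2,3\}$ of $\mathrm{PG}(6,q)$ such that every plane and every solid occurs in at most $q+1$ flags of $C$; for a point $X$ let $\Delta_X(C)$ be the set of flags $(E,S)\in C$ with $X\in E$. Let $P$ be a point and suppose there are flags $(E_i,S_i)\in\Delta_P(C)$, $i\in\{1,2,3\}$, with $E_i\cap E_j=P$ for distinct $i,j$. Then every point $Q$ with $Q\notin\langle E_i,E_j\rangle$ and $Q\notin S_i$ for all $i,j\in\{1,2,3\}$ satisfies $$|\Delta_Q(C)|\le 3q^8+12q^7+21q^6+28q^5+26q^4+18q^3+12q^2+8q+4.$$
   Context: Dimensions are projective (planes 2, solids 3). A flag of type $\{2,3\}$ is a pair $(E,S)$ of a plane $E$ and a solid $S$ with $E\subseteq S$; in the Kneser graph distinct flags $(E,S),(E',S')$ are adjacent iff $E\cap S'=\emptyset$ and $E'\cap S=\emptyset$. $\langle\cdot\rangle$ denotes the span. *)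

From HB Require Import structures.
From mathcomp Require Import all_boot all_order all_algebra all_field.
Set Implicit Arguments. Unset Strict Implicit. Unset Printing Implicit Defensive.
Import GRing.Theory.
Local Open Scope ring_scope.

(* PG(6,q) is modelled by the 7-dimensional vector space 'rV[F]_7 over a
   finite field F with q = #|F|.  Projective subspaces of projective
   dimension d are vector subspaces of dimension d+1. *)
Definition PGvec (F : finFieldType) := 'rV[F]_7.
Definition subsp (F : finFieldType) := {vspace 'rV[F]_7}.

Definition is_point (F : finFieldType) (X : subsp F) : bool := \dim X == 1%N.
Definition is_plane (F : finFieldType) (E : subsp F) : bool := \dim E == 3%N.
Definition is_solid (F : finFieldType) (S : subsp F) : bool := \dim S == 4%N.

Definition flag (F : finFieldType) := (subsp F * subsp F)%type.
Definition is_flag23 (F : finFieldType) (f : flag F) : bool :=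
  [&& is_plane f.1, is_solid f.2 & (f.1 <= f.2)%VS].

(* Adjacency in the Kneser graph: distinct flags with E ∩ S' = ∅ and
   E' ∩ S = ∅ (projectively empty = trivial vector intersection). *)
Definition kneser_adj (F : finFieldType) (f g : flag F) : bool :=
  [&& f != g, (f.1 :&: g.2 == 0)%VS & (g.1 :&: f.2 == 0)%VS].

(* A (finite) set of flags, given as a duplicate-free list. *)
Definition independent_set (F : finFieldType) (C : seq (flag F)) : Prop :=
  [/\ uniq C, all (@is_flag23 F) C &
      forall f g, f \in C -> g \in C -> ~~ kneser_adj f g].

Definition Delta (F : finFieldType) (X : subsp F) (C : seq (flag F)) :
  seq (flag F) := [seq f <- C | (X <= f.1)%VS].

From HB Require Import structures.
From mathcomp Require Import all_boot all_order all_algebra all_field.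
From mathcomp Require Import zify ring.
Set Implicit Arguments. Unset Strict Implicit. Unset Printing Implicit Defensive.
Import GRing.Theory.

(* Let (E, S) be a flag of Delta_Q(C).  As Q is not in E_i, the flag differs
   from (E_i, S_i) and so is not adjacent to it: E meets S_i or S meets E_i,
   for each i.  If E meets some S_i, then E = <Q, E :&: S_i> where E :&: S_i
   is a line or a point of S_i.  Otherwise S meets all three E_i: either S
   contains P, hence the line PQ, or S meets E_1, E_2, E_3 in points
   R_1, R_2, R_3 other than P, and then S = <R_1, R_2, Q, R_3> unless R_3 lies
   in the plane <R_1, R_2, Q>; in that case R_2 lies on the line
   E_2 :&: <R_1, Q, E_3> and S is that plane joined with one more point.
   Each of these families of planes and solids is bounded by double counting
   the tuples of vectors spanning its members; as every plane and every solid
   lies in at most q + 1 flags of C, adding up gives the bound. *)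

Section Counting.

Variable T : eqType.
Implicit Types (s : seq T) (a b : pred T).

Lemma count_predU_le a b s : count (predU a b) s <= count a s + count b s.
Proof. by rewrite -count_predUI leq_addr. Qed.

Lemma count_exists_le (I : finType) (a : I -> pred T) s :
  count (fun x => [exists i, a i x]) s <= \sum_i count (a i) s.
Proof.
elim: s => [|x s IHs] /=; first by rewrite big1.
rewrite big_split /= leq_add //.
by case: (boolP [exists i, a i x]) => // /existsP[i ai]; rewrite (bigD1 i) //= ai.
Qed.

Lemma count_le_in a b s : {in s, forall x, a x -> b x} -> count a s <= count b s.
Proof.
move=> ab; rewrite -(@eq_in_count _ (predI a b)) ?sub_count // => [x /andP[]//|x xs].
by rewrite /= andb_idr // => /(ab x xs).
Qed.

Lemma count_le_mul_size_cover (U : eqType) (g : T -> U) k (Y : seq U) a s :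
  (forall y, count (fun x => g x == y) s <= k) ->
  {in s, forall x, a x -> g x \in Y} -> count a s <= k * size Y.
Proof.
move=> gk; elim: Y a => [|y Y IHY] a /= aY.
  rewrite muln0 leqn0 -(count_pred0 s); apply/eqP/eq_in_count => x xs.
  by apply/negP => /(aY x xs).
pose b x := a x && (g x != y).
have ab : count a s <= count (predU (fun x => g x == y) b) s.
  by apply: sub_count => x ax /=; rewrite /b ax orbN.
rewrite mulnS; apply: leq_trans ab (leq_trans (count_predU_le _ _ _) _).
apply: leq_add (gk y) _; apply: IHY => x xs /andP[ax].
by move: (aY x xs ax); rewrite inE => /orP[->|].
Qed.

Variable U : eqType.

Definition image_in (g : T -> U) (a : pred U) s := undup [seq y <- map g s | a y].

Lemma mem_image_in (g : T -> U) (a : pred U) s y :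
  y \in image_in g a s -> a y /\ exists2 x, x \in s & g x = y.
Proof.
by rewrite mem_undup mem_filter => /andP[ay /mapP[x xs gx]]; split=> //; exists x.
Qed.

Lemma count_le_mul_size_image (g : T -> U) (a : pred U) s k :
  (forall y, count (fun x => g x == y) s <= k) ->
  count (a \o g) s <= k * size (image_in g a s).
Proof.
move=> gk; apply: count_le_mul_size_cover gk _ => x xs ax.
by rewrite mem_undup mem_filter map_f ?andbT.
Qed.

End Counting.

Lemma size_mul_le_card_fibers (T : finType) (U : eqType) (f : T -> U)
    (W : {set T}) (Y : seq U) m :
  uniq Y -> (forall y, y \in Y -> m <= #|[set w in W | f w == y]|) ->
  size Y * m <= #|W|.
Proof.
elim: Y W => [|y Y IHY] W /=; first by rewrite mul0n.
case/andP=> yY uY Wm; rewrite mulSn -(cardsID [set w | f w == y] W).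
apply: leq_add; first by apply: leq_trans (Wm y (mem_head _ _)) _; rewrite setIdE.
apply: IHY => // y' y'Y; apply: leq_trans (Wm y' _) _; first by rewrite inE y'Y orbT.
apply/subset_leq_card/subsetP => w; rewrite !inE => /andP[wW /eqP fw].
by rewrite wW fw eqxx !andbT; apply: contraNneq yY => <-.
Qed.

Lemma size_le_fibers (T : finType) (U : eqType) (f : T -> U) (W : {set T})
    (Y : seq U) m N :
  uniq Y -> 0 < m -> #|W| <= N * m ->
  (forall y, y \in Y -> m <= #|[set w in W | f w == y]|) -> size Y <= N.
Proof.
move=> uY m0 WN Ym; rewrite -(leq_pmul2r m0).
exact: leq_trans (size_mul_le_card_fibers uY Ym) WN.
Qed.

Lemma card_pairs_dep (T1 T2 : finType) (A : {set T1}) (B : T1 -> {set T2}) :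
  #|[set p : T1 * T2 | (p.1 \in A) && (p.2 \in B p.1)]| = \sum_(a in A) #|B a|.
Proof.
rewrite -sum1_card (eq_bigl (fun p : T1 * T2 => (p.1 \in A) && (p.2 \in B p.1))).
  rewrite -(pair_big_dep (mem A) (fun a b => b \in B a) (fun _ _ => 1%N)) /=.
  by apply: eq_bigr => a _; rewrite sum1_card.
by move=> p; rewrite inE.
Qed.

Lemma card_pairs_dep_const (T1 T2 : finType) (A : {set T1}) (B : T1 -> {set T2}) k :
  (forall a, a \in A -> #|B a| = k) ->
  #|[set p : T1 * T2 | (p.1 \in A) && (p.2 \in B p.1)]| = #|A| * k.
Proof. by move=> Bk; rewrite card_pairs_dep -sum_nat_const; apply: eq_bigr. Qed.

Lemma card_pairs_dep_le (T1 T2 : finType) (A : {set T1}) (B : T1 -> {set T2}) k :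
  (forall a, a \in A -> #|B a| <= k) ->
  #|[set p : T1 * T2 | (p.1 \in A) && (p.2 \in B p.1)]| <= #|A| * k.
Proof. by move=> Bk; rewrite card_pairs_dep -sum_nat_const; apply: leq_sum. Qed.

Section FiniteVectorSpace.

Variables (F : finFieldType) (n : nat).
Local Notation V := 'rV[F]_n.
Local Notation q := #|F|.
Implicit Types (U W X L : {vspace V}) (x u v : V).

Definition vsetD U W : {set V} := [set v | (v \in U) && (v \notin W)].

Lemma card_vsetD U W : #|vsetD U W| = q ^ \dim U - q ^ \dim (U :&: W).
Proof.
have -> : vsetD U W = [set v in U] :\: [set v in U :&: W]%VS.
  by apply/setP => v; rewrite !inE memv_cap; case: (_ \in U); case: (_ \in W).
rewrite cardsD (setIidPr _) ?cardsE ?card_vspace //.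
by apply/subsetP => v; rewrite !inE memv_cap => /andP[].
Qed.

Lemma card_vsetD_sub U W : (W <= U)%VS -> #|vsetD U W| = q ^ \dim U - q ^ \dim W.
Proof. by move=> /capv_idPr WU; rewrite card_vsetD WU. Qed.

Lemma sub_point_eq X x : \dim X = 1 -> x \in X -> x != 0%R -> <[x]>%VS = X.
Proof. by move=> dX xX x0; apply/eqP; rewrite eqEdim -memvE xX dX dim_vline x0. Qed.

Lemma dim_add_point U X : \dim X = 1 -> ~~ (X <= U)%VS -> \dim (U + X) = (\dim U).+1.
Proof.
move=> dX XU; have capUX : \dim (U :&: X) = 0.
  apply/eqP; apply: contraNT XU => d0.
  have capX : (U :&: X)%VS = X by apply/eqP; rewrite eqEdim capvSr dX lt0n.
  by rewrite -capX capvSl.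
by have := dimv_sum_cap U X; rewrite capUX dX addn0 addn1.
Qed.

Lemma dim_add_line U x : x \notin U -> \dim (U + <[x]>) = (\dim U).+1.
Proof.
move=> xU; have x0 : x != 0%R by apply: contraNneq xU => ->; apply: mem0v.
by apply: dim_add_point; rewrite ?dim_vline ?x0 // -memvE.
Qed.

(* Each subspace of U of dimension \dim L + 2 containing L is [ext_span L p]
   for the same number of pairs p. *)
Definition ext_pairs L U : {set V * V} :=
  [set p | (p.1 \in vsetD U L) && (p.2 \in vsetD U (L + <[p.1]>))].

Definition ext_span L (p : V * V) := (L + <[p.1]> + <[p.2]>)%VS.

Lemma card_ext_pairs L U : (L <= U)%VS ->
  #|ext_pairs L U| = (q ^ \dim U - q ^ \dim L) * (q ^ \dim U - q ^ (\dim L).+1).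
Proof.
move=> LU; pose B u := vsetD U (L + <[u]>).
rewrite (@card_pairs_dep_const _ _ _ B (q ^ \dim U - q ^ (\dim L).+1)).
  by rewrite card_vsetD_sub.
move=> u; rewrite inE => /andP[uU uL]; rewrite card_vsetD_sub ?dim_add_line //.
by rewrite subv_add LU -memvE.
Qed.

Lemma ext_pairsS L U U' : (U <= U')%VS -> ext_pairs L U \subset ext_pairs L U'.
Proof.
move=> UU'; apply/subsetP => -[u v]; rewrite !inE /=.
by case/andP=> /andP[/(subvP UU') -> ->] /andP[/(subvP UU') -> ->].
Qed.

Lemma ext_span_sub L U p : (L <= U)%VS -> p \in ext_pairs L U ->
  (ext_span L p <= U)%VS /\ \dim (ext_span L p) = (\dim L).+2.
Proof.
move=> LU; rewrite !inE => /andP[/andP[uU uL] /andP[vU vL]].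
by rewrite /ext_span !subv_add LU -!memvE uU vU !dim_add_line.
Qed.

End FiniteVectorSpace.

(* Polynomial identities in q with truncated differences q ^ a - q ^ b, checked
   in int. *)
Ltac subn_ring q_gt1 :=
  apply/eqP; rewrite -eqz_nat !PoszM -!subzn;
  [apply/eqP; ring
  | first [ exact: ltnW q_gt1 | exact: leq_pexp2l (ltnW q_gt1) _
          | exact: (@leq_pexp2l _ 0 _ (ltnW q_gt1))
          | exact: (@leq_pexp2l _ 1 _ (ltnW q_gt1)) ] ..].

Section PG6.

Variable F : finFieldType.
Local Notation V := 'rV[F]_7.
Local Notation q := #|F|.
Implicit Types (P Q S L y : {vspace V}).

Lemma q_gt1 : 1 < q. Proof. exact: card_finNzRing_gt1. Qed.

Lemma size_planes_meeting_solid_in_line S Q Y :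
  \dim S = 4 -> \dim Q = 1 -> ~~ (Q <= S)%VS -> uniq Y ->
  (forall y, y \in Y -> [/\ \dim y = 3, (Q <= y)%VS & 1 < \dim (y :&: S)]) ->
  size Y <= (q ^ 2 + 1) * (q ^ 2 + q + 1).
Proof.
move=> dS dQ QS uY HY; have q1 := q_gt1.
apply: (size_le_fibers (f := fun p => (ext_span 0 p + Q)%VS) (W := ext_pairs 0 S)
  (m := (q ^ 2 - 1) * (q ^ 2 - q)) uY).
- by rewrite !muln_gt0 !subn_gt0; nia.
- by rewrite card_ext_pairs ?sub0v // dimv0 dS; apply: eq_leq; subn_ring q1.
move=> y /HY[dy Qy dyS].
have dyS2 : \dim (y :&: S) = 2.
  apply/eqP; rewrite eqn_leq dyS andbT leqNgt; apply: contra QS => d3.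
  have capy : (y :&: S)%VS = y by apply/eqP; rewrite eqEdim capvSl dy.
  by apply: subv_trans Qy _; rewrite -capy capvSr.
have -> : (q ^ 2 - 1) * (q ^ 2 - q) = #|ext_pairs 0 (y :&: S)|.
  by rewrite card_ext_pairs ?sub0v // dyS2 dimv0.
apply/subset_leq_card/subsetP => p pZ.
rewrite inE (subsetP (ext_pairsS 0 (capvSr y S))) //=.
have [pyS dp] := ext_span_sub (sub0v _) pZ; rewrite dimv0 in dp.
have pS : (ext_span 0 p <= S)%VS := subv_trans pyS (capvSr _ _).
rewrite eqEdim subv_add (subv_trans pyS (capvSl _ _)) Qy dy.
by rewrite dim_add_point // ?dp //; apply: contra QS => /subv_trans; apply.
Qed.

Lemma dimvf7 : \dim (fullv : {vspace V}) = 7.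
Proof. by rewrite dimvf. Qed.

Lemma size_planes_meeting_solid_in_point S Q Y :
  \dim S = 4 -> \dim Q = 1 -> ~~ (Q <= S)%VS -> uniq Y ->
  (forall y, y \in Y -> [/\ \dim y = 3, (Q <= y)%VS & \dim (y :&: S) = 1]) ->
  size Y <= (q ^ 3 + q ^ 2 + q + 1) * (q ^ 4 + q ^ 3).
Proof.
move=> dS dQ QS uY HY; have q1 := q_gt1.
have dSQ : \dim (S + Q) = 5 by rewrite dim_add_point ?dS.
pose f p := (<[p.1]> + Q + <[p.2]>)%VS.
pose W := setX (vsetD S 0) (vsetD fullv (S + Q)).
apply: (size_le_fibers (f := f) (W := W) (m := (q - 1) * (q ^ 3 - q ^ 2)) uY).
- by rewrite !muln_gt0 !subn_gt0; nia.
- rewrite cardsX !card_vsetD_sub ?sub0v ?subvf // dimv0 dS dimvf7 dSQ.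
  by apply: eq_leq; subn_ring q1.
move=> y /HY[dy Qy dyS].
have dySQ : \dim (y :&: (S + Q)) <= 2.
  rewrite leqNgt; apply/negP => d3.
  have capy : (y :&: (S + Q))%VS = y by apply/eqP; rewrite eqEdim capvSl dy.
  have ySSQ : (y + S <= S + Q)%VS by rewrite subv_add addvSl -capy capvSr.
  by have := dimv_sum_cap y S; have := dimvS ySSQ; rewrite dy dS dyS dSQ; lia.
pose Z := setX (vsetD (y :&: S) 0) (vsetD y (S + Q)).
apply: leq_trans (_ : (q - 1) * (q ^ 3 - q ^ 2) <= #|Z|) (subset_leq_card _).
  rewrite cardsX card_vsetD_sub ?sub0v // card_vsetD dyS dimv0 dy leq_mul2l.
  by rewrite leq_sub2l ?orbT // leq_exp2l.
apply/subsetP => -[w u]; rewrite /W /f !inE /= memv_cap memv0 memvf.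
case/andP=> /andP[/andP[wy wS] w0] /andP[uy uSQ].
have wQSQ : (<[w]> + Q <= S + Q)%VS by rewrite addvS // -memvE.
have Qw : ~~ (Q <= <[w]>)%VS by apply: contra QS => /subv_trans; apply; rewrite -memvE.
rewrite wS w0 uSQ /= eqEdim !subv_add -!memvE wy Qy uy dy.
rewrite dim_add_line ?dim_add_point ?dim_vline ?w0 //.
by apply: contra uSQ => /(subvP wQSQ).
Qed.

Lemma size_solids_through_line L Y :
  \dim L = 2 -> uniq Y -> (forall y, y \in Y -> \dim y = 4 /\ (L <= y)%VS) ->
  size Y <= (q ^ 4 + q ^ 3 + q ^ 2 + q + 1) * (q ^ 2 + 1).
Proof.
move=> dL uY HY; have q1 := q_gt1.
apply: (size_le_fibers (f := ext_span L) (W := ext_pairs L fullv)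
  (m := (q ^ 4 - q ^ 2) * (q ^ 4 - q ^ 3)) uY).
- by rewrite !muln_gt0 !subn_gt0; nia.
- by rewrite card_ext_pairs ?subvf // dimvf7 dL; apply: eq_leq; subn_ring q1.
move=> y /HY[dy Ly].
have -> : (q ^ 4 - q ^ 2) * (q ^ 4 - q ^ 3) = #|ext_pairs L y|.
  by rewrite card_ext_pairs // dy dL.
apply/subset_leq_card/subsetP => p py; have [pL dp] := ext_span_sub Ly py.
by rewrite inE (subsetP (ext_pairsS L (subvf y))) //= eqEdim pL dp dy dL.
Qed.

Section Transversals.

Variables (P Q E1 E2 E3 : {vspace V}).
Hypotheses (dP : \dim P = 1) (dQ : \dim Q = 1).
Hypotheses (dE1 : \dim E1 = 3) (dE2 : \dim E2 = 3) (dE3 : \dim E3 = 3).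
Hypotheses (PE1 : (P <= E1)%VS) (PE2 : (P <= E2)%VS) (PE3 : (P <= E3)%VS).

Lemma vsetD_neq0 x X : x \in vsetD X P -> x != 0%R.
Proof. by rewrite inE => /andP[_]; apply: contraNneq => ->; apply: mem0v. Qed.

Lemma vsetD_vline x r X : x \in vsetD <[r]> 0 ->
  r \in vsetD X P -> <[x]>%VS = <[r]>%VS /\ x \in vsetD X P.
Proof.
rewrite inE memv0 => /andP[xr x0] rXP; have r0 := vsetD_neq0 rXP.
move: rXP; rewrite inE => /andP[rX rP].
have xr_eq : <[x]>%VS = <[r]>%VS by apply: sub_point_eq xr x0; rewrite dim_vline r0.
split=> //; rewrite inE (subvP _ _ (memv_line x)) ?xr_eq -?memvE //=.
by apply: contra rP => xP; rewrite memvE -xr_eq -memvE.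
Qed.

Lemma size_solids_spanned_by_transversal Y :
  uniq Y ->
  (forall y, y \in Y -> exists r1 r2 r3,
     [/\ r1 \in vsetD E1 P, r2 \in vsetD E2 P, r3 \in vsetD E3 P &
         y = (<[r1]> + <[r2]> + Q + <[r3]>)%VS]) ->
  size Y <= (q ^ 2 + q) ^ 3.
Proof.
move=> uY HY; have q1 := q_gt1.
pose f (t : V * V * V) := (<[t.1.1]> + <[t.1.2]> + Q + <[t.2]>)%VS.
pose W := setX (setX (vsetD E1 P) (vsetD E2 P)) (vsetD E3 P).
apply: (size_le_fibers (f := f) (W := W) (m := (q - 1) * (q - 1) * (q - 1)) uY).
- by rewrite !muln_gt0 subn_gt0 q1.
- rewrite !cardsX !card_vsetD_sub // dE1 dE2 dE3 dP.
  by apply: eq_leq; subn_ring q1.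
move=> y /HY[r1 [r2 [r3 [r1E r2E r3E ->]]]].
pose Z := setX (setX (vsetD <[r1]> 0) (vsetD <[r2]> 0)) (vsetD <[r3]> 0).
have -> : (q - 1) * (q - 1) * (q - 1) = #|Z|.
  rewrite !cardsX !card_vsetD_sub ?sub0v // dimv0 !dim_vline.
  by rewrite (vsetD_neq0 r1E) (vsetD_neq0 r2E) (vsetD_neq0 r3E).
apply/subset_leq_card/subsetP => -[[x1 x2] x3].
rewrite /Z !in_setX /= => /andP[/andP[x1r x2r] x3r].
rewrite inE /W /f !in_setX /=.
have [<- ->] := vsetD_vline x1r r1E.
have [<- ->] := vsetD_vline x2r r2E.
by have [<- ->] := vsetD_vline x3r r3E; rewrite eqxx.
Qed.

Lemma dim_transversal_plane Ei Ej a b :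
  (Ei :&: Ej)%VS = P -> ~~ (Q <= Ei + Ej)%VS ->
  a \in vsetD Ei P -> b \in vsetD Ej P -> \dim (<[a]> + <[b]> + Q) = 3.
Proof.
move=> EP QE aE bE; have a0 := vsetD_neq0 aE.
move: aE bE; rewrite !inE => /andP[aEi _] /andP[bEj bP].
rewrite dim_add_point ?dim_add_line ?dim_vline ?a0 //.
  apply: contra bP => ba; rewrite -EP memv_cap bEj andbT.
  by move: ba; apply/subvP; rewrite -memvE.
by apply: contra QE => /subv_trans; apply; apply: addvS; rewrite -memvE.
Qed.

Lemma transversal_plane_notP Ei Ej a b :
  (Ei :&: Ej)%VS = P -> ~~ (Q <= Ei + Ej)%VS ->
  a \in vsetD Ei P -> b \in vsetD Ej P -> ~~ (P <= <[a]> + <[b]> + Q)%VS.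
Proof.
move=> EP QE aE bE; have dT := dim_transversal_plane EP QE aE bE.
move: aE bE; rewrite !inE => /andP[aEi aP] /andP[bEj bP].
apply: contra QE => PT; set T := (<[a]> + <[b]> + Q)%VS in dT PT.
have PEi : (P <= Ei)%VS by rewrite -EP capvSl.
have PaEi : (P + <[a]> <= Ei)%VS by rewrite subv_add PEi -memvE.
have bPa : b \notin (P + <[a]>)%VS.
  by apply: contra bP => /(subvP PaEi) bEi; rewrite -EP memv_cap bEi.
have PabT : (P + <[a]> + <[b]>)%VS = T.
  apply/eqP; rewrite eqEdim dT !dim_add_line ?dP // !subv_add PT.
  by rewrite !(subv_trans _ (addvSl _ Q)) ?addvSl ?addvSr.
apply: subv_trans (_ : Q <= T)%VS _; first exact: addvSr.
rewrite -PabT !subv_add -!memvE (subv_trans PEi (addvSl _ _)).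
by rewrite (subvP (addvSl Ei Ej)) ?(subvP (addvSr Ei Ej)).
Qed.

Hypotheses (E12 : (E1 :&: E2)%VS = P) (E13 : (E1 :&: E3)%VS = P).
Hypothesis E23 : (E2 :&: E3)%VS = P.
Hypotheses (QE12 : ~~ (Q <= E1 + E2)%VS) (QE13 : ~~ (Q <= E1 + E3)%VS).
Hypothesis QE23 : ~~ (Q <= E2 + E3)%VS.

(* If <a, b, Q> meets E3 off P then b lies in <a, Q, E3>, which meets E2 in at
   most a line. *)
Definition transversal_pairs : {set V * V} :=
  [set p | (p.1 \in vsetD E1 P) && (p.2 \in vsetD (E2 :&: (<[p.1]> + Q + E3)) P)].

Definition transversal_plane (p : V * V) := (<[p.1]> + <[p.2]> + Q)%VS.

Definition transversal_triples : {set V * V * V} :=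
  [set t | (t.1 \in transversal_pairs) && (t.2 \in vsetD fullv (transversal_plane t.1 + P))].

Lemma card_transversal_pairs : #|transversal_pairs| <= (q ^ 3 - q) * (q ^ 2 - q).
Proof.
pose B a := vsetD (E2 :&: (<[a]> + Q + E3)) P.
apply: leq_trans (@card_pairs_dep_le _ _ (vsetD E1 P) B (q ^ 2 - q) _) _.
  move=> a aE; rewrite /B; set M := (<[a]> + Q + E3)%VS.
  have PM : (P <= E2 :&: M)%VS by rewrite subv_cap PE2 (subv_trans PE3) ?addvSr.
  rewrite card_vsetD_sub // dP leq_sub2r // leq_exp2l ?q_gt1 // leqNgt.
  apply: contra QE23 => d3.
  have E2M : (E2 <= M)%VS.
    have capE2 : (E2 :&: M)%VS = E2 by apply/eqP; rewrite eqEdim capvSl dE2.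
    by rewrite -capE2 capvSr.
  have dM : \dim M <= 5.
    have := dimv_sum_cap (<[a]> + Q) E3; have := dimv_sum_cap <[a]> Q.
    by have := leq_b1 (a != 0%R); rewrite /M dQ dE3 dim_vline; lia.
  have d23 : \dim (E2 + E3) = 5 by have := dimv_sum_cap E2 E3; rewrite E23 dP dE2 dE3; lia.
  have -> : (E2 + E3)%VS = M by apply/eqP; rewrite eqEdim subv_add E2M addvSr d23.
  exact: subv_trans (addvSr <[a]> Q) (addvSl _ E3).
by rewrite card_vsetD_sub // dE1 dP.
Qed.

Lemma card_transversal_triples :
  #|transversal_triples| <= (q ^ 3 - q) * (q ^ 2 - q) * (q ^ 7 - q ^ 4).
Proof.
pose B p := vsetD fullv (transversal_plane p + P).
apply: leq_trans (@card_pairs_dep_le _ _ transversal_pairs B (q ^ 7 - q ^ 4) _) _.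
  move=> p; rewrite inE => /andP[aE]; rewrite !inE memv_cap => /andP[/andP[bE _] bP].
  have bEP : p.2 \in vsetD E2 P by rewrite inE bE bP.
  rewrite card_vsetD_sub ?subvf // dimvf7 dim_add_point ?(dim_transversal_plane E12) //.
  exact: (transversal_plane_notP E12).
by rewrite leq_mul2r card_transversal_pairs orbT.
Qed.

Lemma flat_transversal_sub r1 r2 r3 :
  r1 \in vsetD E1 P -> r2 \in vsetD E2 P -> r3 \in vsetD E3 P ->
  r3 \in transversal_plane (r1, r2) -> (<[r2]> <= <[r1]> + Q + E3)%VS.
Proof.
move=> r1E r2E r3E r3T; set T := transversal_plane (r1, r2) in r3T.
have r1T : (<[r1]> <= T)%VS by rewrite /T /transversal_plane -addvA addvSl.
have T13 : transversal_plane (r1, r3) = T.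
  apply/eqP; rewrite eqEdim (dim_transversal_plane E12) ?(dim_transversal_plane E13) //.
  by rewrite !subv_add r1T -memvE r3T addvSr.
apply: subv_trans (_ : <[r2]> <= T)%VS _.
  exact: subv_trans (addvSr <[r1]> <[r2]>) (addvSl _ Q).
rewrite -T13 /transversal_plane /= !subv_add (subv_trans (addvSl <[r1]> Q)) ?addvSl //=.
rewrite (subv_trans (addvSr <[r1]> Q)) ?addvSl // andbT -memvE.
by move: r3E; rewrite inE => /andP[r3E3 _]; rewrite (subvP (addvSr _ E3)).
Qed.

Lemma size_solids_with_flat_transversal Y :
  uniq Y ->
  (forall y, y \in Y -> exists r1 r2 r3,
     [/\ r1 \in vsetD E1 P, r2 \in vsetD E2 P, r3 \in vsetD E3 P,
         r3 \in transversal_plane (r1, r2) &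
         [/\ \dim y = 4, ~~ (P <= y)%VS & (transversal_plane (r1, r2) <= y)%VS]]) ->
  size Y <= q ^ 3 * (q + 1) * (q ^ 2 + q + 1).
Proof.
move=> uY HY; have q1 := q_gt1.
pose f t := (transversal_plane t.1 + <[t.2]>)%VS.
apply: (size_le_fibers (f := f) (W := transversal_triples)
  (m := (q - 1) * (q - 1) * (q ^ 4 - q ^ 3)) uY).
- by rewrite !muln_gt0 !subn_gt0; nia.
- by apply: leq_trans card_transversal_triples _; apply: eq_leq; subn_ring q1.
move=> y /HY[r1 [r2 [r3 [r1E r2E r3E r3T [dy Py Ty]]]]].
have r2sub := flat_transversal_sub r1E r2E r3E r3T.
set T := transversal_plane (r1, r2) in r3T Ty.
have dT : \dim T = 3 := dim_transversal_plane E12 QE12 r1E r2E.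
pose Z := setX (setX (vsetD <[r1]> 0) (vsetD <[r2]> 0)) (vsetD y T).
have -> : (q - 1) * (q - 1) * (q ^ 4 - q ^ 3) = #|Z|.
  rewrite !cardsX !card_vsetD_sub ?sub0v // dimv0 !dim_vline.
  by rewrite (vsetD_neq0 r1E) (vsetD_neq0 r2E) dy dT.
apply/subset_leq_card/subsetP => -[[x1 x2] v].
rewrite /Z !in_setX /= => /andP[/andP[x1r x2r]]; rewrite inE => /andP[vy vT].
have [x1r_eq x1E] := vsetD_vline x1r r1E.
have [x2r_eq x2E] := vsetD_vline x2r r2E.
have Tx : transversal_plane (x1, x2) = T by rewrite /transversal_plane /= x1r_eq x2r_eq.
have yTv : (T + <[v]>)%VS = y.
  by apply/eqP; rewrite eqEdim subv_add Ty -memvE vy dy dim_add_line ?dT.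
have PT : ~~ (P <= T)%VS by apply: contra Py => /subv_trans; apply.
rewrite inE /f /= Tx yTv eqxx andbT /transversal_triples inE /= Tx.
rewrite /transversal_pairs inE /= x1E /=.
move: x2E; rewrite !inE memv_cap memvf => /andP[-> ->].
rewrite memvE x2r_eq x1r_eq r2sub /=.
apply: contra Py => vTP; rewrite -yTv.
have -> : (T + <[v]>)%VS = (T + P)%VS.
  by apply/eqP; rewrite eqEdim subv_add addvSl -memvE vTP dim_add_point ?dim_add_line ?ltnSn.
exact: addvSr.
Qed.

End Transversals.

End PG6.

Lemma mem_Delta (F : finFieldType) (C : seq (flag F)) X f :
  f \in Delta X C = (X <= f.1)%VS && (f \in C).
Proof. exact: mem_filter. Qed.

Lemma count_Delta_le (F : finFieldType) (C : seq (flag F)) X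
    (g : flag F -> subsp F) a k N :
  (forall y, count (fun f => g f == y) C <= k) ->
  size (image_in g a (Delta X C)) <= N -> count (a \o g) (Delta X C) <= k * N.
Proof.
move=> Ck YN; apply: leq_trans (leq_mul (leqnn k) YN); apply: count_le_mul_size_image.
by move=> y; apply: leq_trans (Ck y); rewrite count_filter; apply: sub_count => f /andP[].
Qed.

Section DeltaQ.

Variables (F : finFieldType) (C : seq (flag F)) (P Q : subsp F) (E S : 'I_3 -> subsp F).
Hypothesis HC : independent_set C.
Hypotheses (HP : is_point P) (HQ : is_point Q).
Hypothesis HES : forall i, (E i, S i) \in Delta P C.
Hypothesis Hmeet : forall i j, i != j -> (E i :&: E j)%VS = P.
Hypothesis HQE : forall i j, ~~ (Q <= E i + E j)%VS.
Hypothesis HQS : forall i, ~~ (Q <= S i)%VS.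

Local Notation D := (Delta Q C).
Local Notation q := #|F|.

Lemma flag_dims f : f \in C -> [/\ \dim f.1 = 3, \dim f.2 = 4 & (f.1 <= f.2)%VS].
Proof.
by case: HC => _ /allP flagsC _ /flagsC /and3P[/eqP dE /eqP dS ES].
Qed.

Lemma Delta_flag f : f \in D -> [/\ \dim f.1 = 3, \dim f.2 = 4, (Q <= f.1)%VS & (Q <= f.2)%VS].
Proof.
rewrite mem_Delta => /andP[Qf /flag_dims[d1 d2 f12]].
by split=> //; apply: subv_trans Qf f12.
Qed.

Lemma E_S_flag i : [/\ \dim (E i) = 3, \dim (S i) = 4 & (P <= E i)%VS].
Proof. by have := HES i; rewrite mem_Delta => /andP[PE /flag_dims[]]. Qed.

Lemma Q_notin_E i : ~~ (Q <= E i)%VS.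
Proof. by have := HQE i i; rewrite addvv. Qed.

Lemma Delta_meets f i : f \in D -> (f.1 :&: S i != 0)%VS || (E i :&: f.2 != 0)%VS.
Proof.
rewrite mem_Delta => /andP[Qf fC].
have iC : (E i, S i) \in C by have := HES i; rewrite mem_Delta => /andP[].
have fi : f != (E i, S i) by apply: contraNneq (Q_notin_E i) => fi; rewrite fi in Qf.
by case: HC => _ _ /(_ _ _ fC iC); rewrite /kneser_adj fi /= negb_and.
Qed.

Definition meets_in_line (X y : subsp F) := 1 < \dim (y :&: X).
Definition meets_in_point (X y : subsp F) := \dim (y :&: X) == 1.

Let e0 : 'I_3 := ord0.
Let e1 : 'I_3 := @Ordinal 3 1 isT. (* not [inord 1]: [e0 != e1] must compute *)
Let e2 : 'I_3 := ord_max.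

(* [vpick] returns 0 on the trivial space; [transversal_solid] excludes it. *)
Definition transversal_point (y : subsp F) i := vpick (y :&: E i)%VS.
Local Notation r := transversal_point.

Definition spans_transversal y :=
  \dim (<[r y e0]> + <[r y e1]> + Q + <[r y e2]>) == 4.

Definition transversal_solid y :=
  ~~ (P <= y)%VS && [forall i, (y :&: E i != 0)%VS].

Definition spanning_solid y := transversal_solid y && spans_transversal y.
Definition flat_solid y := transversal_solid y && ~~ spans_transversal y.

Lemma size_Delta_le_classes :
  size D <= \sum_i (count (meets_in_line (S i) \o fst) D
                    + count (meets_in_point (S i) \o fst) D)
            + (count ((fun y => P <= y)%VS \o snd) D
               + (count (spanning_solid \o snd) D + count (flat_solid \o snd) D)).
Proof.
rewrite -(count_predC (fun f => [exists i, f.1 :&: S i != 0]%VS) D) leq_add //.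
  apply: leq_trans (count_exists_le (fun i (f : flag F) => f.1 :&: S i != 0)%VS D) _.
  apply: leq_sum => i _.
  apply: leq_trans (count_predU_le _ _ _); apply: sub_count => f /=.
  by rewrite /meets_in_line /meets_in_point -dimv_eq0; case: (\dim _) => [|[|]].
apply: leq_trans (_ : _ <= count (predU ((fun y => P <= y)%VS \o snd)
  (predU (spanning_solid \o snd) (flat_solid \o snd))) D) _.
  apply: count_le_in => f fD /= /existsPn noS.
  have allE : [forall i, (f.2 :&: E i != 0)%VS].
    by apply/forallP => i; have := Delta_meets i fD; rewrite (negbTE (noS i)) capvC.
  rewrite /spanning_solid /flat_solid /transversal_solid allE.
  by case: (P <= f.2)%VS; case: spans_transversal.
by apply: leq_trans (count_predU_le _ _ _) _; rewrite leq_add2l count_predU_le.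
Qed.

Hypothesis Hplanes : forall X : subsp F, count (fun f => f.1 == X) C <= q.+1.
Hypothesis Hsolids : forall X : subsp F, count (fun f => f.2 == X) C <= q.+1.

Lemma count_meets_in_line i :
  count (meets_in_line (S i) \o fst) D <= q.+1 * ((q ^ 2 + 1) * (q ^ 2 + q + 1)).
Proof.
apply: (count_Delta_le Hplanes).
have [_ dS _] := E_S_flag i.
apply: (size_planes_meeting_solid_in_line dS (eqP HQ) (HQS i) (undup_uniq _)) => y.
by case/mem_image_in => Sy [f /Delta_flag[d1 _ Qf _] fy]; subst y.
Qed.

Lemma count_meets_in_point i :
  count (meets_in_point (S i) \o fst) D <= q.+1 * ((q ^ 3 + q ^ 2 + q + 1) * (q ^ 4 + q ^ 3)).
Proof.
apply: (count_Delta_le Hplanes).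
have [_ dS _] := E_S_flag i.
apply: (size_planes_meeting_solid_in_point dS (eqP HQ) (HQS i) (undup_uniq _)) => y.
by case/mem_image_in => /eqP Sy [f /Delta_flag[d1 _ Qf _] fy]; subst y.
Qed.

Lemma count_solids_through_P :
  count ((fun y => P <= y)%VS \o snd) D
    <= q.+1 * ((q ^ 4 + q ^ 3 + q ^ 2 + q + 1) * (q ^ 2 + 1)).
Proof.
apply: (count_Delta_le Hsolids).
have [_ _ PE] := E_S_flag e0.
have dPQ : \dim (P + Q) = 2.
  rewrite dim_add_point ?(eqP HP) ?(eqP HQ) //.
  by apply: contra (Q_notin_E e0) => /subv_trans; apply.
apply: (size_solids_through_line dPQ (undup_uniq _)) => y.
case/mem_image_in => Py [f /Delta_flag[_ d2 _ Qf] fy]; subst y.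
by rewrite subv_add Py Qf.
Qed.

Lemma transversal_pointP y i :
  transversal_solid y -> r y i \in vsetD (E i) P /\ r y i \in y.
Proof.
case/andP=> Py /forallP/(_ i) yE.
have := memv_pick (y :&: E i)%VS; rewrite memv_cap => /andP[ry rE].
have r0 : r y i != 0%R by rewrite vpick0.
split=> //; rewrite inE rE /=; apply: contra Py => rP.
by rewrite -(sub_point_eq (eqP HP) rP r0) -memvE.
Qed.

Lemma count_spanning_solids :
  count (spanning_solid \o snd) D <= q.+1 * (q ^ 2 + q) ^ 3.
Proof.
apply: (count_Delta_le Hsolids).
have [d0 _ P0] := E_S_flag e0; have [d1 _ P1] := E_S_flag e1.
have [d2 _ P2] := E_S_flag e2.
apply: (size_solids_spanned_by_transversal (Q := Q) (eqP HP) d0 d1 d2 P0 P1 P2 (undup_uniq _)).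
move=> y /mem_image_in[/andP[ty sy] [f /Delta_flag[_ dy _ Qy] fy]].
rewrite fy in dy Qy.
have [r0E r0y] := transversal_pointP e0 ty; have [r1E r1y] := transversal_pointP e1 ty.
have [r2E r2y] := transversal_pointP e2 ty.
exists (r y e0), (r y e1), (r y e2); split=> //.
by apply/eqP; rewrite eq_sym eqEdim !subv_add -!memvE r0y r1y r2y Qy dy (eqP sy).
Qed.

Lemma count_flat_solids :
  count (flat_solid \o snd) D <= q.+1 * (q ^ 3 * (q + 1) * (q ^ 2 + q + 1)).
Proof.
apply: (count_Delta_le Hsolids).
have [d0 _ P0] := E_S_flag e0; have [d1 _ P1] := E_S_flag e1.
have [d2 _ P2] := E_S_flag e2.
apply: (size_solids_with_flat_transversal (eqP HP) (eqP HQ) d0 d1 d2 P0 P1 P2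
  (@Hmeet e0 e1 isT) (@Hmeet e0 e2 isT) (@Hmeet e1 e2 isT)
  (HQE e0 e1) (HQE e0 e2) (HQE e1 e2) (undup_uniq _)).
move=> y /mem_image_in[/andP[ty sy] [f /Delta_flag[_ dy _ Qy] fy]].
rewrite fy in dy Qy.
have [r0E r0y] := transversal_pointP e0 ty; have [r1E r1y] := transversal_pointP e1 ty.
have [r2E r2y] := transversal_pointP e2 ty.
have Ty : (transversal_plane Q (r y e0, r y e1) <= y)%VS.
  by rewrite !subv_add -!memvE r0y r1y Qy.
exists (r y e0), (r y e1), (r y e2); split=> //; last by case/andP: ty.
apply: contraNT sy => r2T; rewrite /spans_transversal.
by rewrite dim_add_line // (dim_transversal_plane (eqP HQ) (@Hmeet e0 e1 isT) (HQE e0 e1)).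
Qed.

End DeltaQ.

Theorem lemma4p3 (F : finFieldType) (C : seq (flag F))
  (HC : independent_set C)
  (Hplanes : forall E : subsp F, count (fun f => f.1 == E) C <= #|F|.+1)
  (Hsolids : forall S : subsp F, count (fun f => f.2 == S) C <= #|F|.+1)
  (P : subsp F) (HP : is_point P)
  (E S : 'I_3 -> subsp F)
  (HES : forall i, (E i, S i) \in Delta P C)
  (Hmeet : forall i j, i != j -> (E i :&: E j)%VS = P)
  (Q : subsp F) (HQ : is_point Q)
  (HQE : forall i j, ~~ (Q <= E i + E j)%VS)
  (HQS : forall i, ~~ (Q <= S i)%VS) :
  let q := #|F| in
  size (Delta Q C) <= 3 * q ^ 8 + 12 * q ^ 7 + 21 * q ^ 6 + 28 * q ^ 5
                      + 26 * q ^ 4 + 18 * q ^ 3 + 12 * q ^ 2 + 8 * q + 4.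
Proof.
rewrite /=; apply: leq_trans (size_Delta_le_classes HC HES HQE) _.
have planes i := leq_add (count_meets_in_line HC HQ HES HQS Hplanes i)
                         (count_meets_in_point HC HQ HES HQS Hplanes i).
have solids := leq_add (count_solids_through_P HC HP HQ HES HQE Hsolids)
  (leq_add (count_spanning_solids Q HC HP HES Hsolids)
           (count_flat_solids HC HP HQ HES Hmeet HQE Hsolids)).
apply: leq_trans (leq_add (leq_sum _ (fun i _ => planes i)) solids) _.
by rewrite sum_nat_const card_ord; apply: eq_leq; ring.
Qed.
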